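(* For every $n\ge1$, the bijection $B_0$ from signed forests of rooted trees on $\{1,\dots,n\}$ to $C(n+1)$ is compatible with the actions of $\mathfrak{S}_{n+1}$: for every $\sigma\in\mathfrak{S}_{n+1}$ and every signed forest $\varepsilon F$, $B_0(\sigma\cdot(\varepsilon F))=\sigma\cdot B_0(\varepsilon F)$.
   Context: A shrub $P$ on a finite set $I$ is a set $E$ of edges with a height function $h_P:I\to\mathbb{N}$ satisfying: edges join vertices whose heights differ by $1$; every vertex of positive height covers some vertex ($j$ covers $i$ if $\{i,j\}\in E$ and $h(j)=h(i)+1$); no four distinct $a,b,c,d$ with $a$ covering $b,c$, $c$ covering $d$, $\{b,d\}\notin E$; no five distinct $a,b,c,d,e$ with $a$ covering $c,d$, $b$ covering $d,e$, $\{a,e\},\{b,c\}\notin E$. Forests of rooted trees are the shrubs (height = distance to root) in which no vertex covers two distinct vertices. Each shrub $P$ on $\{1,\dots,n\}$ has a fraction $f_P\in\mathbb{Q}(u_1,\dots,u_n)$, its image under the operad morphism $\operatorname{Arb}\to\operatorname{Mould}$ determined by $[2\triangleleft1]\mapsto1/(u_1(u_1+u_2))$, $[1][2]\mapsto1/(u_1u_2)$ (for a forest, $f_F=\prod_j 1/\sum_{k\in F_j}u_k$ where $F_j$ is the subtree rooted at $j$). $\mathfrak{S}_{n+1}$ (permutations of $\{0,\dots,n\}$) acts on $\mathbb{Q}(u_1,\dots,u_n)$ by setting $u_0=-(u_1+\dots+u_n)$ and permuting $u_0,\dots,u_n$. On signed shrubs $\varepsilon P$ ($\varepsilon=\pm1$)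 the anticyclic action is $\sigma\cdot(\varepsilon P)=\varepsilon'P'$ where $\varepsilon'f_{P'}=\sigma\cdot(\varepsilon f_P)$ (well defined since $\varepsilon P\mapsto\varepsilon f_P$ is injective with $\mathfrak{S}_{n+1}$-stable image); it maps signed forests to signed forests. $C(n+1)$ is the set of signed rooted trees $\varepsilon(T,r)$ on $\{0,1,\dots,n\}$ modulo the relation $(T,r)=-(T,r')$ whenever $r'$ is adjacent to $r$ in $T$; $\mathfrak{S}_{n+1}$ acts on it by relabelling vertices. $B_0(\varepsilon F)=\varepsilon B_+(0,F)$, where $B_+(0,F)$ is the tree rooted at a new vertex $0$ obtained by joining $0$ to the roots of the trees of $F$. *)

From HB Require Import structures.
From mathcomp Require Import all_boot all_order all_algebra all_fingroup.
From mathcomp Require Import generic_quotient fraction.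
From mathcomp Require Import mpoly.
From Stdlib Require Import Relations.Relation_Operators.

Set Implicit Arguments.
Unset Strict Implicit.
Unset Printing Implicit Defensive.

Import GRing.Theory.
Local Open Scope ring_scope.
Local Open Scope quotient_scope.

(* Vertices.  The vertex set {1,...,n} is encoded by 'I_n: i : 'I_n     *)
(* stands for the vertex i+1.  The vertex set {0,...,n} is 'I_n.+1,   *)
(* and vertex i+1 of {1,...,n} is [vtx i] = lift ord0 i.               *)
Definition vtx (n : nat) (i : 'I_n) : 'I_n.+1 := lift ord0 i.

(* Forests of rooted trees on {1..n}: a parent map (None = root), with  *)
(* no cycles, i.e. iterating the parent map from any vertex reaches     *)
(* "beyond a root" (None) after at most n steps.                        *)
Definition forest (n : nat) := {ffun 'I_n -> option 'I_n}.

Definition fstep (n : nat) (F : forest n) (x : option 'I_n) : option 'I_n :=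
  if x is Some v then F v else None.

Definition is_forest (n : nat) (F : forest n) : Prop :=
  forall v : 'I_n, iter n (fstep F) (Some v) = None.

Definition in_subtree (n : nat) (F : forest n) (j k : 'I_n) : bool :=
  [exists m : 'I_n.+1, iter m (fstep F) (Some k) == Some j].

(* The field Q(u_1,...,u_n): fractions of {mpoly rat[n]}; the variable  *)
(* u_{i+1} is 'X_i for i : 'I_n.                                       *)
Definition ratfun (n : nat) := {fraction {mpoly rat[n]}}.
Definition tofracP (n : nat) (p : {mpoly rat[n]}) : ratfun n := @FracField.tofrac _ p.

Definition fF (n : nat) (F : forest n) : ratfun n :=
  \prod_(j < n) (tofracP (\sum_(k < n | in_subtree F j k) 'X_k))^-1.

Definition sgnF (n : nat) (e : bool) : ratfun n := (-1) ^+ e.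

Definition uvar (n : nat) (j : 'I_n.+1) : {mpoly rat[n]} :=
  if unlift ord0 j is Some i then 'X_i else - \sum_(i < n) 'X_i.

Definition poly_act (n : nat) (s : 'S_n.+1) (p : {mpoly rat[n]}) : {mpoly rat[n]} :=
  p \mPo [tuple uvar (s (vtx i)) | i < n].

(* extended to Q(u_1..u_n) by acting on numerator and denominator of a
   representative (independent of the representative) *)
Definition frac_act (n : nat) (s : 'S_n.+1) (f : ratfun n) : ratfun n :=
  tofracP (poly_act s (repr f).1) / tofracP (poly_act s (repr f).2).

(* Rooted trees on {0..n}: a parent map p together with its root r:     *)
(* p r = r, and every vertex reaches r by iterating p (at most n steps). *)
(* Signed rooted trees: (sign, parent map, root), sign true = minus.    *)
Definition rtree (n : nat) := {ffun 'I_n.+1 -> 'I_n.+1}.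

Definition is_rtree (n : nat) (p : rtree n) (r : 'I_n.+1) : bool :=
  (p r == r) && [forall v, iter n p v == r].

Definition srtree (n : nat) := (bool * rtree n * 'I_n.+1)%type.

(* underlying (unrooted) tree: its edge set *)
Definition redges (n : nat) (p : rtree n) (r : 'I_n.+1) : {set {set 'I_n.+1}} :=
  [set [set v; p v] | v in [set v | v != r]].

(* elementary relation: (T,r) = -(T,r') whenever r' is adjacent to r in T *)
Definition reroot_step (n : nat) (x y : srtree n) : Prop :=
  let: (e, p, r) := x in
  let: (e', p', r') := y in
  [/\ is_rtree p r, is_rtree p' r', redges p r = redges p' r',
      (r != r') && ([set r; r'] \in redges p r) & e' = ~~ e].

(* equality in C(n+1): the equivalence relation generated by reroot_step *)
Definition Ceq (n : nat) : srtree n -> srtree n -> Prop :=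
  clos_refl_sym_trans (srtree n) (@reroot_step n).

Definition tree_act (n : nat) (s : 'S_n.+1) (x : srtree n) : srtree n :=
  let: (e, p, r) := x in (e, [ffun v => s (p ((s^-1)%g v))], s r).

(* B_0(eps F) = eps B_+(0, F): new root 0 joined to the roots of F *)
Definition B0 (n : nat) (e : bool) (F : forest n) : srtree n :=
  (e, [ffun v : 'I_n.+1 =>
         if unlift ord0 v is Some i then
           (if F i is Some j then vtx j else ord0)
         else ord0], ord0).

From HB Require Import structures.
From mathcomp Require Import all_boot all_order all_algebra all_fingroup.
From mathcomp Require Import generic_quotient fraction.
From mathcomp Require Import mpoly.
From Stdlib Require Import Relations.Relation_Operators.

(* For a rooted tree (T, r) on {0,...,n} put D(T, r) = prod_{j <> r} U_j, where
   U_j is the sum of the u_k over the descendants k of j.  For r = 0 this is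
   the denominator of f_F, where B_0(F) = (T, 0), so eps f_F = eps / D(B_0 F).
   Relabelling commutes with D, hence sigma . (eps f_F) = eps / D(sigma . B_0 F),
   a tree rooted at sigma(0).  Moving the root along an edge r -- c only
   changes U_c into U_r = -U_c (the u_k sum to 0), so each such move, which is a
   generating step of the relation of C(n+1), flips the sign of D.  Moving the
   root to 0 produces eps' B_0(F') = sigma . B_0(eps F) in C(n+1) with
   eps' f_F' = sigma . (eps f_F); and eps' f_F' determines eps' and F', because
   evaluating at suitable integer points recovers the sets of descendants. *)

Set Implicit Arguments.
Unset Strict Implicit.
Unset Printing Implicit Defensive.

Import GRing.Theory Num.Theory.
Local Open Scope ring_scope.
Local Open Scope quotient_scope.

Local Notation "x %:F" := (@FracField.tofrac _ x).

HB.instance Definition _ (n : nat) (s : 'S_n.+1) :=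
  GRing.RMorphism.copy (poly_act s) (comp_mpoly [tuple uvar (s (vtx i)) | i < n]).

Lemma comp_mpoly_comp (R : comNzRingType) (n k l : nat) (p : {mpoly R[n]})
    (lq : n.-tuple {mpoly R[k]}) (lr : k.-tuple {mpoly R[l]}) :
  (p \mPo lq) \mPo lr = p \mPo [tuple tnth lq i \mPo lr | i < n].
Proof.
rewrite [p \mPo lq]comp_mpolyEX [RHS]comp_mpolyEX raddf_sum; apply: eq_bigr => m _.
rewrite /= comp_mpolyZ !comp_mpolyX rmorph_prod; congr (_ *: _).
by apply: eq_bigr => i _; rewrite rmorphXn tnth_map tnth_ord_tuple.
Qed.

Section PolyAction.
Variable n : nat.
Implicit Types (s t : 'S_n.+1) (p : {mpoly rat[n]}).

Lemma uvar_vtx (i : 'I_n) : uvar (vtx i) = 'X_i.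
Proof. by rewrite /uvar /vtx liftK. Qed.

Lemma uvar0 : uvar ord0 = - \sum_(i < n) 'X_i.
Proof. by rewrite /uvar unlift_none. Qed.

Lemma sum_uvar : \sum_(j < n.+1) uvar j = 0.
Proof.
rewrite big_ord_recl uvar0 (eq_bigr _ (fun i _ => uvar_vtx i)).
exact: addNr.
Qed.

Lemma poly_actX s (i : 'I_n) : poly_act s 'X_i = uvar (s (vtx i)).
Proof. by rewrite /poly_act comp_mpolyXU -tnth_nth tnth_map tnth_ord_tuple. Qed.

Lemma poly_act_uvar s j : poly_act s (uvar j) = uvar (s j).
Proof.
case: (unliftP ord0 j) => [i ->|->]; first by rewrite uvar_vtx poly_actX.
have : \sum_(j < n.+1) uvar (s j) = 0.
  by rewrite -[RHS]sum_uvar [in RHS](reindex_inj (@perm_inj _ s)).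
rewrite big_ord_recl => /eqP; rewrite addr_eq0 => /eqP ->.
rewrite uvar0 (rmorphN (poly_act s)) (raddf_sum (poly_act s)).
by apply: congr1; apply: eq_bigr => i _; apply: poly_actX.
Qed.

Lemma poly_act_comp s t p : poly_act t (poly_act s p) = poly_act (s * t)%g p.
Proof.
rewrite /poly_act comp_mpoly_comp; congr (_ \mPo _).
apply: eq_from_tnth => i; rewrite !tnth_map !tnth_ord_tuple.
by rewrite -/(poly_act t (uvar (s (vtx i)))) poly_act_uvar permM.
Qed.

Lemma poly_act1 p : poly_act 1%g p = p.
Proof.
rewrite /poly_act -[RHS]comp_mpoly_id; congr (_ \mPo _).
by apply: eq_from_tnth => i; rewrite !tnth_map !tnth_ord_tuple perm1 uvar_vtx.
Qed.

Lemma poly_act_inj s : injective (poly_act s).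
Proof.
move=> p q e; rewrite -(poly_act1 p) -(poly_act1 q) -(mulgV s).
by rewrite -!poly_act_comp e.
Qed.

Lemma poly_act_eq0 s p : (poly_act s p == 0) = (p == 0).
Proof.
apply/eqP/eqP => [e|->]; last exact: rmorph0.
by apply: (@poly_act_inj s); rewrite e (rmorph0 (poly_act s)).
Qed.

End PolyAction.

Lemma pi_ratioE (R : idomainType) (x : {ratio R}) :
  \pi_({fraction R}) x = (\n_x)%:F / (\d_x)%:F.
Proof.
have d0 := denom_ratioP x.
apply/(mulIf (_ : (\d_x)%:F != 0)); first by rewrite tofrac_eq0.
rewrite divfK ?tofrac_eq0 //.
unlock FracField.tofrac; rewrite -[_ * _]/(FracField.mul _ _) !piE.
apply/eqmodP; rewrite /= FracField.equivfE /FracField.mulf.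
rewrite !numden_Ratio ?mulr1 ?oner_neq0 ?mulf_neq0 ?oner_neq0 //.
by rewrite mulrC.
Qed.

Lemma tofrac_repr (R : idomainType) (f : {fraction R}) :
  (repr f).1%:F / (repr f).2%:F = f.
Proof. by rewrite -[RHS]reprK pi_ratioE. Qed.

Lemma rmorph_frac_eq (R S : idomainType) (phi : {rmorphism R -> S}) (a b c d : R) :
  injective phi -> b != 0 -> d != 0 -> a%:F / b%:F = c%:F / d%:F ->
  (phi a)%:F / (phi b)%:F = (phi c)%:F / (phi d)%:F :> {fraction S}.
Proof.
move=> phi_inj b0 d0 /eqP e; apply/eqP; move: e.
have nz x : x != 0 -> phi x != 0.
  by move=> x0; rewrite -(rmorph0 phi) (inj_eq phi_inj).
rewrite !eqr_div ?tofrac_eq0 ?nz // -!tofracM !tofrac_eq -!rmorphM => /eqP ->.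
exact: eqxx.
Qed.

Lemma frac_act_div (n : nat) (s : 'S_n.+1) (a b : {mpoly rat[n]}) : b != 0 ->
  frac_act s (tofracP a / tofracP b) =
  tofracP (poly_act s a) / tofracP (poly_act s b).
Proof.
move=> b0; rewrite /frac_act.
apply: (rmorph_frac_eq (@poly_act_inj n s) (denom_ratioP _) b0).
exact: tofrac_repr.
Qed.

Lemma iter_reach_lt_card (T : finType) (f : T -> T) (x y : T) (m : nat) :
  iter m f x = y -> exists2 m', (m' < #|T|)%N & iter m' f x = y.
Proof.
move=> e; have xy : fconnect f x y by rewrite -e fconnect_iter.
exists (findex f x y); last exact: iter_findex.
apply: leq_trans (findex_max xy) _.
by rewrite -size_orbit -(card_uniqP (orbit_uniq f x)) max_card.
Qed.

Lemma iter_in_le (T : Type) (f : T -> T) (X : pred T) (x : T) (i m : nat) :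
  {homo f : v / X v} -> X (iter i f x) -> (i <= m)%N -> X (iter m f x).
Proof. by move=> fX Xi /subnK <-; rewrite iterD; apply: (iter_in (S := X)). Qed.

Lemma eq_iter_off (T : Type) (f g : T -> T) (X : pred T) (x : T) (m : nat) :
  (forall v, ~~ X v -> f v = g v) ->
  (forall i, (i < m)%N -> ~~ X (iter i f x)) -> iter m f x = iter m g x.
Proof.
move=> fg; elim: m => [|m IH] offX //=.
have {}IH : iter m f x = iter m g x by apply: IH => i /ltnW; apply: offX.
by rewrite -IH fg // offX.
Qed.

Section RootedTrees.
Variable n : nat.
Implicit Types (p : rtree n) (r c j k : 'I_n.+1).

Lemma is_rtreeP p r :
  reflect (p r = r /\ forall v, exists m, iter m p v = r) (is_rtree p r).
Proof.
apply: (iffP andP) => [[/eqP pr /forallP h]|[pr h]].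
  by split=> // v; exists n; apply/eqP.
split; first exact/eqP.
apply/forallP => v; have [m hm] := h v.
have [m' + hm'] := iter_reach_lt_card hm; rewrite card_ord ltnS => le_m'n.
by rewrite -[X in iter X](subnK le_m'n) iterD hm' iter_fix.
Qed.

Lemma iter_rtree p r v m : is_rtree p r -> (n <= m)%N -> iter m p v = r.
Proof.
case/andP=> /eqP pr /forallP h le_nm.
by rewrite -(subnK le_nm) iterD (eqP (h v)) iter_fix.
Qed.

Definition desc p j k := [exists m : 'I_n.+1, iter m p k == j].

Lemma descP p r j k : is_rtree p r -> j != r ->
  reflect (exists m, iter m p k = j) (desc p j k).
Proof.
move=> hr jr; apply: (iffP existsP) => [[m /eqP h]|[m h]]; first by exists m.
have [le|lt] := leqP n m; first by move: jr; rewrite -h (iter_rtree _ hr le) eqxx.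
by exists (Ordinal (leq_trans lt (leqnSn n))); rewrite /= h.
Qed.

Definition subtree_sum p j : {mpoly rat[n]} := \sum_(k | desc p j k) uvar k.

Definition tree_den p r : {mpoly rat[n]} := \prod_(j | j != r) subtree_sum p j.

Definition reroot p r c : rtree n :=
  [ffun v => if (v == r) || (v == c) then c else p v].

Lemma reroot_id p r c v : v != r -> v != c -> reroot p r c v = p v.
Proof. by rewrite ffunE => /negbTE -> /negbTE ->. Qed.

Section Reroot.
Variables (p : rtree n) (r c : 'I_n.+1).
Hypotheses (hr : is_rtree p r) (pc : p c = r) (cr : c != r).

Let p' := reroot p r c.
Let X := [pred v : 'I_n.+1 | (v == r) || (v == c)].

Let pr : p r = r. Proof. by case/andP: hr => /eqP. Qed.
Let rc : r != c. Proof. by rewrite eq_sym. Qed.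

Let Xp : {homo p : v / X v}.
Proof. by move=> v; rewrite !inE => /orP [] /eqP ->; rewrite ?pr ?pc eqxx. Qed.

Let Xp' : {homo p' : v / X v}.
Proof. by move=> v; rewrite /p' /reroot ffunE !inE => ->; rewrite eqxx orbT. Qed.

Let p'E v : ~~ X v -> p v = p' v.
Proof. by rewrite !inE negb_or => /andP [vr vc]; rewrite /p' reroot_id. Qed.

Let p'r : p' r = c. Proof. by rewrite /p' /reroot ffunE eqxx. Qed.
Let p'c : p' c = c. Proof. by rewrite /p' /reroot ffunE eqxx orbT. Qed.

Let first_visit k :
  exists t, [/\ X (iter t p k), forall i, (i < t)%N -> ~~ X (iter i p k)
              & iter t p' k = iter t p k].
Proof.
have ex : exists t, X (iter t p k).
  by exists n; rewrite (iter_rtree _ hr (leqnn n)) !inE eqxx.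
case: (ex_minnP ex) => t Xt tmin.
have before i : (i < t)%N -> ~~ X (iter i p k).
  by move=> lt_it; apply/negP => /tmin; rewrite leqNgt lt_it.
by exists t; split=> //; apply/esym/(eq_iter_off p'E).
Qed.

Lemma reroot_rtree : is_rtree p' c.
Proof.
apply/is_rtreeP; split=> // v; have [t [+ _ e]] := first_visit v.
rewrite !inE => /orP [] /eqP h; first by exists t.+1; rewrite iterS e h p'r.
by exists t; rewrite e h.
Qed.

Lemma reroot_desc j k : ~~ X j -> desc p j k = desc p' j k.
Proof.
rewrite !inE negb_or => /andP [jr jc].
have notX (f : rtree n) i m : {homo f : v / X v} -> (i <= m)%N ->
    iter m f k = j -> ~~ X (iter i f k).
  move=> Xf le_im e; apply/negP => /(iter_in_le Xf)/(_ le_im).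
  by rewrite e !inE (negbTE jr) (negbTE jc).
apply/(descP k hr jr)/(descP k reroot_rtree jc) => -[m e]; exists m.
  rewrite -(eq_iter_off p'E) // => i /ltnW le_im; exact: notX _ _ _ Xp le_im e.
rewrite -(eq_iter_off (f := p') (g := p) (X := X)) => [//|v /p'E -> //|i /ltnW le_im].
exact: notX _ _ _ Xp' le_im e.
Qed.

Lemma reroot_desc_root k : desc p' r k = ~~ desc p c k.
Proof.
have [t [Xt before e]] := first_visit k.
apply/(descP k reroot_rtree rc)/negP => [[m hm] /(descP k hr cr) [m' hm']|nck].
  move: Xt; rewrite !inE => /orP [] /eqP Xt.
    have [lt_m't|le_tm'] := ltnP m' t.
      by move: (before _ lt_m't); rewrite hm' !inE eqxx orbT.
    by move: cr; rewrite -hm' -(subnK le_tm') iterD Xt (iter_fix _ pr) eqxx.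
  have [lt_mt|le_tm] := ltnP m t.
    move: (before _ lt_mt); rewrite (eq_iter_off p'E) => [|i lt_im].
      by rewrite hm !inE eqxx.
    exact: before _ (ltn_trans lt_im lt_mt).
  by move: rc; rewrite -hm -(subnK le_tm) iterD e Xt (iter_fix _ p'c) eqxx.
move: Xt; rewrite !inE => /orP [] /eqP Xt; first by exists t; rewrite e Xt.
by case: nck; apply/(descP k hr cr); exists t.
Qed.

Lemma reroot_redges : redges p r = redges p' c.
Proof.
apply/setP => E; apply/imsetP/imsetP => [[v]|[v]]; rewrite !inE => hv ->.
  have [vc|vc] := eqVneq v c.
    by exists r; rewrite ?inE // vc pc p'r setUC.
  by exists v; rewrite ?inE // p'E // !inE negb_or hv.
have [vr|vr] := eqVneq v r; first by exists c; rewrite ?inE // vr pc p'r setUC.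
by exists v; rewrite ?inE // p'E // !inE negb_or vr.
Qed.

Lemma reroot_edge : [set r; c] \in redges p r.
Proof. by apply/imsetP; exists c; rewrite ?inE // pc setUC. Qed.

Lemma reroot_tree_den : tree_den p' c = - tree_den p r.
Proof.
rewrite /tree_den (bigD1 r rc) [in RHS](bigD1 c cr) /= -mulNr; congr (_ * _).
  rewrite /subtree_sum; apply/eqP; rewrite -addr_eq0.
  under eq_bigl do rewrite reroot_desc_root.
  have := sum_uvar n; rewrite (bigID (desc p c)) /= => sum0.
  by rewrite -[X in _ == X]sum0 addrC.
apply: eq_big => [j|j /andP [jc jr]]; first by rewrite andbC.
by apply: eq_bigl => k; rewrite reroot_desc // !inE negb_or jr jc.
Qed.

End Reroot.

Lemma reroot_Ceq (d : nat) (e : bool) p r a : is_rtree p r -> iter d p a = r ->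
  exists e' p', [/\ is_rtree p' a, Ceq (e, p, r) (e', p', a)
                  & (-1) ^+ e' * tree_den p' a = (-1) ^+ e * tree_den p r].
Proof.
elim: d e p r => [|d IH] e p r hr /=.
  by move=> ->; exists e, p; split=> //; apply: rst_refl.
set c := iter d p a => pc.
have [cr|cr] := eqVneq c r; first exact: IH e p r hr cr.
have pr : p r = r by case/andP: hr => /eqP.
have hrc : iter d (reroot p r c) a = c.
  symmetry; apply: (eq_iter_off (X := [pred v | (v == r) || (v == c)])).
    by move=> v; rewrite !inE negb_or => /andP [vr vc]; rewrite reroot_id.
  move=> i lt_id; apply/negP; rewrite !inE => Xi.
  have r_fix : {homo p : v / v == r} by move=> v /eqP ->; rewrite pr.
  have : iter i.+1 p a == r by rewrite iterS; case/orP: Xi => /eqP ->; rewrite ?pr ?pc.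
  move/(iter_in_le (X := pred1 r) r_fix)/(_ lt_id)/eqP => dr.
  by move: cr; rewrite /c dr eqxx.
have hr' := reroot_rtree c hr.
have [e' [p'' [hr'' Ceq'' den'']]] := IH (~~ e) _ _ hr' hrc.
exists e', p''; split=> //.
  apply: (@rst_trans _ _ _ (~~ e, reroot p r c, c) _ _ Ceq'').
  apply: rst_step; split=> //; first exact: reroot_redges.
  by rewrite eq_sym cr; apply: reroot_edge.
by rewrite den'' (reroot_tree_den hr pc cr) signrN mulrN mulNr opprK.
Qed.

End RootedTrees.

Section Relabel.
Variables (n : nat) (s : 'S_n.+1).
Implicit Types (p : rtree n).

Definition relabel p : rtree n := [ffun v => s (p ((s^-1)%g v))].

Lemma tree_actE e p r : tree_act s (e, p, r) = (e, relabel p, s r).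
Proof. by []. Qed.

Lemma iter_relabel p m v : iter m (relabel p) v = s (iter m p ((s^-1)%g v)).
Proof.
elim: m => [|m IH] /=; first by rewrite permKV.
by rewrite IH /relabel ffunE permK.
Qed.

Lemma relabel_rtree p r : is_rtree p r -> is_rtree (relabel p) (s r).
Proof.
case/andP=> /eqP pr /forallP h; apply/andP; split; first by rewrite ffunE permK pr.
by apply/forallP => v; rewrite iter_relabel (eqP (h _)).
Qed.

Lemma desc_relabel p j k : desc (relabel p) (s j) (s k) = desc p j k.
Proof.
by apply: eq_existsb => m; rewrite iter_relabel permK (inj_eq (@perm_inj _ s)).
Qed.

Lemma subtree_sum_relabel p j :
  subtree_sum (relabel p) (s j) = poly_act s (subtree_sum p j).
Proof.
rewrite /subtree_sum (raddf_sum (poly_act s)) (reindex_inj (@perm_inj _ s)) /=.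
by apply: eq_big => [k|k _]; rewrite ?desc_relabel // -poly_act_uvar.
Qed.

Lemma tree_den_relabel p r :
  tree_den (relabel p) (s r) = poly_act s (tree_den p r).
Proof.
rewrite /tree_den (rmorph_prod (poly_act s)) (reindex_inj (@perm_inj _ s)) /=.
by apply: eq_big => [j|j _]; rewrite ?(inj_eq (@perm_inj _ s)) // subtree_sum_relabel.
Qed.

End Relabel.

Section ForestTrees.
Variable n : nat.
Implicit Types (p : rtree n) (F : forest n).

Definition opt_vtx (x : option 'I_n) : 'I_n.+1 :=
  if x is Some i then vtx i else ord0.

Lemma opt_vtx_inj : injective opt_vtx.
Proof. by case=> [i|] [j|] //= /lift_inj ->. Qed.

Lemma opt_vtxP (v : 'I_n.+1) : exists x, v = opt_vtx x.
Proof. by case: (unliftP ord0 v) => [i ->|->]; [exists (Some i) | exists None]. Qed.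

Definition lifts_forest p F := forall x, p (opt_vtx x) = opt_vtx (fstep F x).

Lemma iter_fstep_None F m : iter m (fstep F) None = None.
Proof. exact: iter_fix. Qed.

Lemma iter_lifts_forest p F m x : lifts_forest p F ->
  iter m p (opt_vtx x) = opt_vtx (iter m (fstep F) x).
Proof. by move=> pF; elim: m => //= m ->; rewrite pF. Qed.

Lemma lifts_forest_rtree p F : lifts_forest p F -> is_forest F <-> is_rtree p ord0.
Proof.
move=> pF; split => [hF|/andP [_ /forallP h] i].
  apply/andP; split; first by rewrite (pF None).
  apply/forallP => v; have [[i|] ->] := opt_vtxP v;
    by rewrite (iter_lifts_forest _ _ pF) ?hF ?iter_fstep_None.
apply: opt_vtx_inj; rewrite -(iter_lifts_forest _ (Some i) pF).
by apply/eqP; exact: h.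
Qed.

Lemma lifts_forest_desc p F i k : lifts_forest p F ->
  desc p (vtx i) (vtx k) = in_subtree F i k.
Proof.
move=> pF; apply: eq_existsb => m.
rewrite (iter_lifts_forest _ (Some k) pF).
by rewrite -[vtx i]/(opt_vtx (Some i)) (inj_eq opt_vtx_inj).
Qed.

Lemma lifts_forest_desc0 p F i : lifts_forest p F -> desc p (vtx i) ord0 = false.
Proof.
move=> pF; apply/negbTE/existsP => -[m].
rewrite -[ord0]/(opt_vtx None) (iter_lifts_forest _ None pF) iter_fstep_None.
by rewrite -[vtx i]/(opt_vtx (Some i)) (inj_eq opt_vtx_inj).
Qed.

Definition forest_den F : {mpoly rat[n]} :=
  \prod_(i < n) \sum_(k < n | in_subtree F i k) 'X_k.

Lemma lifts_forest_tree_den p F : lifts_forest p F -> tree_den p ord0 = forest_den F.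
Proof.
move=> pF; rewrite /tree_den big_mkcond big_ord_recl /= mul1r.
apply: eq_bigr => i _; rewrite /subtree_sum big_mkcond big_ord_recl /=.
rewrite (lifts_forest_desc0 i pF) add0r [RHS]big_mkcond.
by apply: eq_bigr => k _; rewrite (lifts_forest_desc _ _ pF) uvar_vtx.
Qed.

Definition B0_parent F : rtree n :=
  [ffun v : 'I_n.+1 => if unlift ord0 v is Some i then
                         (if F i is Some j then vtx j else ord0)
                       else ord0].

Lemma B0E e F : B0 e F = (e, B0_parent F, ord0).
Proof. by []. Qed.

Lemma B0_parent_lifts F : lifts_forest (B0_parent F) F.
Proof.
case=> [i|] /=; rewrite /B0_parent ffunE ?unlift_none //.
by rewrite /vtx liftK; case: (F i).
Qed.

Definition forest_of p : forest n := [ffun i => unlift ord0 (p (vtx i))].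

Lemma forest_of_lifts p : p ord0 = ord0 -> lifts_forest p (forest_of p).
Proof.
move=> p0 [i|] //=; rewrite /forest_of ffunE.
by case: (unliftP ord0 (p (vtx i))) => [j ->|->].
Qed.

Lemma B0_parent_forest_of p : p ord0 = ord0 -> B0_parent (forest_of p) = p.
Proof.
move=> p0; apply/ffunP => v; have [x ->] := opt_vtxP v.
by rewrite (B0_parent_lifts _ x) (forest_of_lifts p0 x).
Qed.

End ForestTrees.

Lemma sum_bits_lt (N : nat) (a : nat -> bool) : (\sum_(i < N) a i * 2 ^ i < 2 ^ N)%N.
Proof.
elim: N => [|N IH]; first by rewrite big_ord0.
rewrite big_ord_recr /= expnS mul2n -addnn.
apply: leq_trans (_ : 2 ^ N + a N * 2 ^ N <= _)%N; first by rewrite ltn_add2r.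
by rewrite leq_add2l; case: (a N); rewrite ?mul1n ?mul0n.
Qed.

Lemma sum_bits_inj (N : nat) (a b : nat -> bool) :
  (\sum_(i < N) a i * 2 ^ i = \sum_(i < N) b i * 2 ^ i)%N ->
  forall i, (i < N)%N -> a i = b i.
Proof.
elim: N => [|N IH] // e i lt_iN; rewrite !big_ord_recr /= in e.
have eN : a N = b N.
  move/(congr1 (fun x => x %/ 2 ^ N)%N): e; rewrite ![(_ + _ * _)%N]addnC.
  rewrite !divnMDl ?expn_gt0 // !divn_small ?sum_bits_lt // !addn0.
  by case: (a N); case: (b N).
move: lt_iN; rewrite ltnS leq_eqVlt => /orP [/eqP -> //|]; apply: IH.
by move: e; rewrite eN => /addIn.
Qed.

Lemma sum_exp2_inj (n : nat) (S T : {set 'I_n}) :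
  (\sum_(k in S) 2 ^ k = \sum_(k in T) 2 ^ k)%N -> S = T.
Proof.
pose bit (X : {set 'I_n}) (j : nat) := [exists k : 'I_n, (k == j :> nat) && (k \in X)].
have bitE X (i : 'I_n) : bit X i = (i \in X).
  apply/existsP/idP => [[k /andP [/eqP /val_inj -> //]]|iX].
  by exists i; rewrite eqxx.
have sumE (X : {set 'I_n}) : (\sum_(k in X) 2 ^ k = \sum_(i < n) bit X i * 2 ^ i)%N.
  rewrite big_mkcond; apply: eq_bigr => i _; rewrite bitE.
  by case: (i \in X); rewrite ?mul1n ?mul0n.
rewrite !sumE => e; apply/setP => i.
by rewrite -!bitE (sum_bits_inj e (ltn_ord i)).
Qed.

Section ForestInjectivity.
Variable n : nat.
Implicit Types (A B F : forest n).

(* At this point the coordinates over S sum to 0, and by the uniqueness of binary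
   expansions the coordinates over another nonempty T do not. *)
Definition cancel_point (S : {set 'I_n}) (m k : 'I_n) : rat :=
  if k == m then - ((\sum_(k' in S :\ m) 2 ^ k')%N)%:R else (2 ^ k)%N%:R.

Lemma cancel_point_sum (S T : {set 'I_n}) m : m \in S -> T != set0 ->
  (\sum_(k in T) cancel_point S m k == 0) = (T == S).
Proof.
move=> mS /set0Pn [k0 k0T].
have off X : m \notin X -> \sum_(k in X) cancel_point S m k = (\sum_(k in X) 2 ^ k)%N%:R.
  move=> mX; rewrite natr_sum; apply: eq_bigr => k kX; rewrite /cancel_point.
  by case: eqP => // km; move: mX; rewrite -km kX.
have [mT|mT] := boolP (m \in T).
  rewrite (big_setD1 _ mT) /= off ?setD11 // {1}/cancel_point eqxx addrC subr_eq0.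
  rewrite eqr_nat; apply/eqP/eqP => [e|->//].
  by rewrite -(setD1K mT) -(setD1K mS) (sum_exp2_inj e).
rewrite off // pnatr_eq0 (big_setD1 _ k0T) /= addn_eq0 expn_eq0 /=.
by apply/esym/negbTE; apply: contraNneq mT => ->.
Qed.

Definition subtree F (i : 'I_n) : {set 'I_n} := [set k | in_subtree F i k].

Lemma iter_forest F m k : is_forest F -> (n <= m)%N -> iter m (fstep F) (Some k) = None.
Proof. by move=> hF le_nm; rewrite -(subnK le_nm) iterD hF iter_fstep_None. Qed.

Lemma in_subtreeP F j k : is_forest F ->
  reflect (exists m, iter m (fstep F) (Some k) = Some j) (in_subtree F j k).
Proof.
move=> hF; apply: (iffP existsP) => [[m /eqP h]|[m h]]; first by exists m.
have [le|lt] := leqP n m; first by move: h; rewrite iter_forest.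
by exists (Ordinal (leq_trans lt (leqnSn n))); rewrite /= h.
Qed.

Lemma forest_cycle F m x : is_forest F -> iter m (fstep F) (Some x) = Some x -> m = 0%N.
Proof.
move=> hF; case: m => // m cyc; have := iterM n m.+1 (fstep F) (Some x).
by rewrite iter_forest ?leq_pmulr // iter_fix.
Qed.

Lemma forest_antisym F a b x y : is_forest F ->
  iter a (fstep F) (Some x) = Some y -> iter b (fstep F) (Some y) = Some x -> x = y.
Proof.
move=> hF xy yx; have := @forest_cycle F (b + a) x hF.
rewrite iterD xy yx => /(_ erefl) /eqP; rewrite addn_eq0 => /andP [_ /eqP a0].
by move: xy; rewrite a0 => -[].
Qed.

Lemma subtree_self F i : i \in subtree F i.
Proof. by rewrite inE; apply/existsP; exists ord0. Qed.

Lemma subtree_neq0 F i : subtree F i != set0.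
Proof. by apply/set0Pn; exists i; apply: subtree_self. Qed.

Lemma subtree_sub F i k : is_forest F -> k \in subtree F i -> subtree F k \subset subtree F i.
Proof.
move=> hF; rewrite inE => /(in_subtreeP _ _ hF) [m hm].
apply/subsetP => l; rewrite !inE => /(in_subtreeP _ _ hF) [m' hm'].
by apply/(in_subtreeP _ _ hF); exists (m + m')%N; rewrite iterD hm'.
Qed.

Lemma meval_forest_den F (x : 'I_n -> rat) :
  (forest_den F).@[x] = \prod_(j < n) \sum_(k in subtree F j) x k.
Proof.
rewrite /forest_den rmorph_prod; apply: eq_bigr => j _; rewrite raddf_sum /=.
by apply: eq_big => [k|k _]; rewrite ?inE ?mevalXU.
Qed.

(* At the cancel point of subtree A i the i-th factor of forest_den A vanishes,
   hence so does some factor of forest_den B. *)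
Lemma subtree_in_family A B (a b : bool) : is_forest A -> is_forest B ->
  (-1) ^+ a * forest_den B = (-1) ^+ b * forest_den A ->
  forall i, exists j, subtree A i = subtree B j.
Proof.
move=> hA hB e i.
have vanish : \sum_(k in subtree A i) cancel_point (subtree A i) i k = 0.
  by apply/eqP; rewrite cancel_point_sum ?subtree_self ?subtree_neq0.
move/(congr1 (meval (cancel_point (subtree A i) i))): e.
rewrite !mevalM !meval_forest_den !rmorph_sign [in RHS](bigD1 i) //= vanish mul0r mulr0.
move/eqP; rewrite mulf_eq0 signr_eq0 /= => /prodf_eq0 [j _].
by rewrite cancel_point_sum ?subtree_self ?subtree_neq0 // => /eqP <-; exists j.
Qed.

Lemma subtree_eq A B (a b : bool) : is_forest A -> is_forest B ->
  (-1) ^+ a * forest_den B = (-1) ^+ b * forest_den A -> subtree A =1 subtree B.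
Proof.
move=> hA hB e k; have [j ej] := subtree_in_family hA hB e k.
have [j' ej'] := subtree_in_family hB hA (esym e) k.
apply/eqP; rewrite eqEsubset; apply/andP; split.
  by rewrite ej'; apply: subtree_sub; rewrite // -ej' subtree_self.
by rewrite ej; apply: subtree_sub; rewrite // -ej subtree_self.
Qed.

(* The B-parent q of k lies on the A-path from k to its A-parent p, so q = p. *)
Lemma subtree_parent A B k p : is_forest A -> is_forest B ->
  subtree A =1 subtree B -> A k = Some p -> B k = Some p.
Proof.
move=> hA hB e Ak.
have loop F q : is_forest F -> F q = Some q -> False.
  by move=> hF Fq; have := @forest_cycle F 1 q hF; rewrite /= Fq => /(_ erefl).
have : k \in subtree B p by rewrite -e inE; apply/(in_subtreeP _ _ hA); exists 1%N.
rewrite inE => /(in_subtreeP _ _ hB) [[|m]].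
  by move=> -[kp]; move: Ak; rewrite kp => /(loop A p hA).
rewrite iterSr /=; case Bk: (B k) => [q|]; last by rewrite iter_fstep_None.
move=> qp; have : q \in subtree A p by rewrite e inE; apply/(in_subtreeP _ _ hB); exists m.
have : k \in subtree A q by rewrite e inE; apply/(in_subtreeP _ _ hB); exists 1%N; rewrite /= Bk.
rewrite !inE => /(in_subtreeP _ _ hA) [[|t] kq] /(in_subtreeP _ _ hA) [t' pq].
  by move: kq => -[kq]; move: Bk; rewrite kq => /(loop B q hB).
by move: kq; rewrite iterSr /= Ak => /(forest_antisym hA)/(_ pq) ->.
Qed.

Lemma forest_eq_subtree A B : is_forest A -> is_forest B ->
  subtree A =1 subtree B -> A = B.
Proof.
move=> hA hB e; apply/ffunP => k.
case Ak: (A k) => [p|]; first by rewrite (subtree_parent hA hB e Ak).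
case Bk: (B k) => [q|] //.
by move: (subtree_parent hB hA (fsym e) Bk); rewrite Ak.
Qed.

Lemma forest_den_neq0 F : forest_den F != 0.
Proof.
apply/eqP => /(congr1 (meval (fun _ => 1))); rewrite meval_forest_den meval0.
move/eqP; rewrite prodf_seq_eq0 => /hasP [j _ /=].
by rewrite sumr_const pnatr_eq0 cards_eq0 (negbTE (subtree_neq0 F j)).
Qed.

Lemma sgnF_fF e F : sgnF n e * fF F = tofracP ((-1) ^+ e) / tofracP (forest_den F).
Proof. by rewrite /sgnF /fF /forest_den /tofracP rmorph_sign rmorph_prod prodfV. Qed.

Lemma sgnF_fF_inj A B a b : is_forest A -> is_forest B ->
  sgnF n a * fF A = sgnF n b * fF B -> a = b /\ A = B.
Proof.
move=> hA hB; rewrite !sgnF_fF => /eqP.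
rewrite eqr_div ?tofrac_eq0 ?forest_den_neq0 // -!tofracM tofrac_eq => /eqP e.
have AB := forest_eq_subtree hA hB (subtree_eq hA hB e).
split=> //; move: e; rewrite AB => /(mulIf (forest_den_neq0 B)).
by move/(congr1 (meval (fun _ => 0))); rewrite !rmorph_sign; case: a; case: b.
Qed.

End ForestInjectivity.

Lemma frac_act_sgnF_fF (n : nat) (s : 'S_n.+1) (e : bool) (F : forest n) :
  frac_act s (sgnF n e * fF F) =
  tofracP ((-1) ^+ e) / tofracP (poly_act s (forest_den F)).
Proof. by rewrite sgnF_fF frac_act_div ?forest_den_neq0 // (rmorph_sign (poly_act s)). Qed.

Theorem mainTheorem19 (n : nat) (hn : (0 < n)%N) (s : 'S_n.+1)
    (e : bool) (F : forest n) (hF : is_forest F) :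
  (exists (e' : bool) (F' : forest n),
      is_forest F' /\ sgnF n e' * fF F' = frac_act s (sgnF n e * fF F)) /\
  (forall (e' : bool) (F' : forest n), is_forest F' ->
      sgnF n e' * fF F' = frac_act s (sgnF n e * fF F) ->
      Ceq (B0 e' F') (tree_act s (B0 e F))).
Proof.
have liftF := B0_parent_lifts F.
have hsT := relabel_rtree s ((lifts_forest_rtree liftF).1 hF).
have [e' [p' [hp' Ceq' den']]] := reroot_Ceq e hsT (iter_rtree ord0 hsT (leqnn n)).
have p'0 : p' ord0 = ord0 by case/andP: hp' => /eqP.
have liftF' := forest_of_lifts p'0.
have hF' : is_forest (forest_of p') by apply/(lifts_forest_rtree liftF').
have fF' : sgnF n e' * fF (forest_of p') = frac_act s (sgnF n e * fF F).
  rewrite frac_act_sgnF_fF sgnF_fF; apply/eqP.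
  rewrite eqr_div ?tofrac_eq0 ?poly_act_eq0 ?forest_den_neq0 // -!tofracM tofrac_eq.
  rewrite -(lifts_forest_tree_den liftF) -tree_den_relabel -(lifts_forest_tree_den liftF').
  by rewrite -[tree_den p' _](signrMK e') den' mulrCA signrMK.
split; first by exists e', (forest_of p').
move=> e'' F'' hF'' fF''; have [-> ->] := sgnF_fF_inj hF'' hF' (etrans fF'' (esym fF')).
by rewrite !B0E B0_parent_forest_of // tree_actE; apply: rst_sym.
Qed.
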